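(* Let $q$ be a prime power and $T\in\mathbb F_q[X,Y,Z]$ a reduced polynomial satisfying Property (a): $T(a,0,z)=T(0,b,z)=z$ for all $a,b,z\in\mathbb F_q$, and Property (b): $T(x,1,0)=x$ and $T(1,y,0)=y$ for all $x,y\in\mathbb F_q$. Then $$T(X,Y,Z)=Z+XYZ\,M_1(X,Y,Z)+M_2(X,Y),$$ with $M_1(X,Y,Z)=\sum_{i,j,k=0}^{q-2}b_{ijk}X^iY^jZ^k$ and $M_2(X,Y)=\sum_{i=1}^{q-1}\sum_{j=1}^{q-1}c_{ij}X^iY^j$, where for every $1\le j\le q-1$, $$\sum_{i=1}^{q-1}c_{ij}=\sum_{i=1}^{q-1}c_{ji}=\begin{cases}1&\text{if } j=1,\\0&\text{if } j>1.\end{cases}$$ Moreover $T(1,y,z)=y+z+yz\,M_1(1,y,z)$ for all $y,z\in\mathbb F_q$.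
   Context: A polynomial is reduced if its degree in each variable is less than $q$. *)

From HB Require Import structures.
From mathcomp Require Import all_boot all_order all_algebra all_field.
From mathcomp Require Import mpoly.
Set Implicit Arguments. Unset Strict Implicit. Unset Printing Implicit Defensive.
Import Order.TTheory GRing.Theory.
Local Open Scope ring_scope.

Definition vX (F : fieldType) : {mpoly F[3]} := 'X_(ord0 : 'I_3).
Definition vY (F : fieldType) : {mpoly F[3]} := 'X_(lift ord0 ord0 : 'I_3).
Definition vZ (F : fieldType) : {mpoly F[3]} := 'X_(ord_max : 'I_3).

Definition ev3 (F : fieldType) (x y z : F) : 'I_3 -> F :=
  fun i => nth 0 [:: x; y; z] i.
Definition eval3 (F : fieldType) (P : {mpoly F[3]}) (x y z : F) : F :=
  P.@[ev3 x y z].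

Definition reduced (F : fieldType) (q : nat) (P : {mpoly F[3]}) : Prop :=
  forall m, m \in msupp P -> forall i : 'I_3, (m i < q)%N.

Definition M1poly (F : fieldType) (q : nat) (b : nat -> nat -> nat -> F)
  : {mpoly F[3]} :=
  \sum_(i < q.-1) \sum_(j < q.-1) \sum_(k < q.-1)
     (b i j k)%:MP * (vX F) ^+ i * (vY F) ^+ j * (vZ F) ^+ k.

Definition M2poly (F : fieldType) (q : nat) (c : nat -> nat -> F)
  : {mpoly F[3]} :=
  \sum_(1 <= i < q) \sum_(1 <= j < q) (c i j)%:MP * (vX F) ^+ i * (vY F) ^+ j.

From HB Require Import structures.
From mathcomp Require Import all_boot all_order all_algebra all_field.
From mathcomp Require Import mpoly.
From mathcomp.algebra_tactics Require Import ring.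

Set Implicit Arguments.
Unset Strict Implicit.
Unset Printing Implicit Defensive.

Import GRing.Theory.
Local Open Scope ring_scope.

(* Write T = sum t_ijk X^i Y^j Z^k with i, j, k < q.  A polynomial of degree
   < q in each variable is determined by its values on q points in each
   variable, so the hypotheses become linear conditions on the t_ijk:
   (a) says that T(X,0,Z) and T(0,Y,Z) are the monomial Z, hence
   t_i0k = t_0jk = [i = j = 0, k = 1]; (b) says that the row and column sums
   of the matrix (t_ij0) are Kronecker deltas at 1.  Hence Z is the only
   monomial of T with i = 0 or j = 0, the monomials with i, j, k >= 1 form
   XYZ M1 and those with i, j >= 1, k = 0 form M2.  Finally
   M2(1,Y) = T(1,Y,0) = Y. *)

Local Notation monomial3 F i j k := (vX F ^+ i * vY F ^+ j * vZ F ^+ k).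

Section OrdinalSums.

Variable V : nmodType.

Lemma sum_ord_delta n a (f : nat -> V) :
  \sum_(i < n) f i *+ (i == a :> nat) = f a *+ (a < n)%N.
Proof.
by under eq_bigr do rewrite mulrb; rewrite -big_mkcond big_ord1_eq mulrb.
Qed.

Lemma sum_ord_delta2 n a b (f : nat -> nat -> V) :
  \sum_(i < n) \sum_(j < n) f i j *+ ((i == a :> nat) && (j == b :> nat)) =
  f a b *+ ((a < n) && (b < n))%N.
Proof.
under eq_bigr => i _ do under eq_bigr => j _ do rewrite -mulnb mulnC mulrnA.
under eq_bigr => i _ do rewrite sumrMnl (sum_ord_delta n b (f i)).
by rewrite (sum_ord_delta n a (fun i => f i b *+ _)) -mulrnA mulnC mulnb.
Qed.

Lemma sum_ord_delta3 n a b c (f : nat -> nat -> nat -> V) :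
  \sum_(i < n) \sum_(j < n) \sum_(k < n)
    f i j k *+ [&& i == a :> nat, j == b :> nat & k == c :> nat] =
  f a b c *+ [&& a < n, b < n & c < n]%N.
Proof.
under eq_bigr => i _ do under eq_bigr => j _ do under eq_bigr => k _
  do rewrite -mulnb mulnC mulrnA.
under eq_bigr => i _ do under eq_bigr => j _ do rewrite sumrMnl.
under eq_bigr => i _ do rewrite sumrMnl (sum_ord_delta2 n b c (f i)).
by rewrite (sum_ord_delta n a (fun i => f i b c *+ _)) -mulrnA mulnC mulnb.
Qed.

Lemma sum_cube_recl n (f : nat -> nat -> nat -> V) :
  \sum_(i < n.+1) \sum_(j < n.+1) \sum_(k < n.+1) f i j k =
  \sum_(j < n.+1) \sum_(k < n.+1) f 0%N j k +
  \sum_(i < n) \sum_(k < n.+1) f i.+1 0%N k +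
  \sum_(i < n) \sum_(j < n) f i.+1 j.+1 0%N +
  \sum_(i < n) \sum_(j < n) \sum_(k < n) f i.+1 j.+1 k.+1.
Proof.
rewrite big_ord_recl -!addrA; congr (_ + _).
under eq_bigr => i _ do rewrite big_ord_recl.
rewrite big_split; congr (_ + _).
under eq_bigr => i _ do under eq_bigr => j _ do rewrite big_ord_recl.
by under eq_bigr => i _ do rewrite big_split; rewrite big_split.
Qed.

End OrdinalSums.

Section PolynomialFunctions.

Variables (R : idomainType) (s : seq R) (n : nat).
Hypotheses (s_uniq : uniq s) (s_large : (n <= size s)%N).

Lemma poly_fun_coef_eq (g h : nat -> R) :
  {in s, forall a, \sum_(i < n) g i * a ^+ i = \sum_(i < n) h i * a ^+ i} ->
  forall i, (i < n)%N -> g i = h i.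
Proof.
move=> eq_gh i lt_i_n; apply/eqP; rewrite -subr_eq0.
have p0 : \poly_(i < n) (g i - h i) = 0.
  apply: roots_geq_poly_eq0 s_uniq (leq_trans (size_poly _ _) s_large).
  apply/allP => a /eq_gh eq_gh_a; apply/rootP; rewrite horner_poly.
  by under eq_bigr do rewrite mulrBl; rewrite sumrB eq_gh_a subrr.
have := congr1 (fun p : {poly R} => p`_i) p0.
by rewrite coef_poly lt_i_n coef0 => ->.
Qed.

Lemma poly2_fun_coef_eq (f g : nat -> nat -> R) :
  {in s &, forall a b, \sum_(i < n) \sum_(j < n) f i j * (a ^+ i * b ^+ j) =
                       \sum_(i < n) \sum_(j < n) g i j * (a ^+ i * b ^+ j)} ->
  forall i j, (i < n)%N -> (j < n)%N -> f i j = g i j.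
Proof.
move=> eq_fg i j lt_i_n lt_j_n.
pose partial (e : nat -> nat -> R) a j := \sum_(i < n) e i j * a ^+ i.
have sum2_partial (e : nat -> nat -> R) a b :
    \sum_(i < n) \sum_(j < n) e i j * (a ^+ i * b ^+ j) =
    \sum_(j < n) partial e a j * b ^+ j.
  rewrite exchange_big; apply: eq_bigr => k _; rewrite mulr_suml.
  by apply: eq_bigr => l _; rewrite mulrA.
apply: (poly_fun_coef_eq (g := f^~ j) (h := g^~ j) _ lt_i_n) => a a_s.
apply: (poly_fun_coef_eq (g := partial f a) (h := partial g a) _ lt_j_n).
by move=> b b_s; rewrite -!sum2_partial eq_fg.
Qed.

Lemma poly_fun_monomial c (g : nat -> R) : (c < n)%N ->
  {in s, forall a, \sum_(i < n) g i * a ^+ i = a ^+ c} ->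
  forall i, (i < n)%N -> g i = (i == c)%:R.
Proof.
move=> lt_c_n g_mono; apply: poly_fun_coef_eq => a /g_mono->.
under eq_bigr do rewrite mulr_natl.
by rewrite (sum_ord_delta n c (fun i => a ^+ i)) lt_c_n.
Qed.

Lemma poly2_fun_monomial c d (f : nat -> nat -> R) : (c < n)%N -> (d < n)%N ->
  {in s &, forall a b, \sum_(i < n) \sum_(j < n) f i j * (a ^+ i * b ^+ j) =
                       a ^+ c * b ^+ d} ->
  forall i j, (i < n)%N -> (j < n)%N -> f i j = ((i == c) && (j == d))%:R.
Proof.
move=> lt_c_n lt_d_n f_mono; apply: poly2_fun_coef_eq => a b a_s b_s.
rewrite f_mono //; under eq_bigr do under eq_bigr do rewrite mulr_natl.
by rewrite (sum_ord_delta2 n c d (fun i j => a ^+ i * b ^+ j)) lt_c_n lt_d_n.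
Qed.

End PolynomialFunctions.

Definition mnm3 (i j k : nat) : 'X_{1..3} :=
  [multinom nth 0%N [:: i; j; k] l | l < 3].

Lemma mnm3_eta (m : 'X_{1..3}) :
  m = mnm3 (m ord0) (m (lift ord0 ord0)) (m ord_max).
Proof.
apply/mnmP => -[[|[|[|//]]] lt_l3]; rewrite mnmE /=.
all: by congr (m _); apply: val_inj.
Qed.

Lemma eq_mnm3 i j k i' j' k' :
  (mnm3 i j k == mnm3 i' j' k') = [&& i == i', j == j' & k == k'].
Proof.
apply/eqP/and3P => [/mnmP eq_m | [/eqP-> /eqP-> /eqP->] //].
move: (eq_m ord0) (eq_m (lift ord0 ord0)) (eq_m ord_max).
by rewrite !mnmE /= => -> -> ->.
Qed.

Section ReducedPolynomials.

Variable F : fieldType.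

Lemma mpolyX_mnm3 i j k : 'X_[mnm3 i j k] = monomial3 F i j k.
Proof.
rewrite mpolyXE_id !big_ord_recl big_ord0 mulr1 mulrA !mnmE.
by rewrite /vZ; congr (_ * 'X_ _ ^+ _); apply: val_inj.
Qed.

Lemma eval3_monomial (x y z : F) i j k :
  eval3 (monomial3 F i j k) x y z = x ^+ i * y ^+ j * z ^+ k.
Proof. by rewrite /eval3 !rmorphM !rmorphXn /= !mevalXU. Qed.

Lemma eval3_M2poly q (c : nat -> nat -> F) (x y z : F) :
  eval3 (M2poly q c) x y z =
  \sum_(1 <= i < q) \sum_(1 <= j < q) c i j * x ^+ i * y ^+ j.
Proof.
rewrite /eval3 /M2poly raddf_sum; apply: eq_bigr => i _.
rewrite raddf_sum; apply: eq_bigr => j _.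
by rewrite /= !rmorphM !rmorphXn /= mevalC !mevalXU.
Qed.

Lemma reduced_mpolyE q (P : {mpoly F[3]}) : reduced q P ->
  P = \sum_(i < q) \sum_(j < q) \sum_(k < q)
        P@_(mnm3 i j k) *: monomial3 F i j k.
Proof.
move=> redP; apply/mpolyP => m; rewrite [in RHS](mnm3_eta m) !raddf_sum /=.
under eq_bigr => i _ do rewrite raddf_sum.
under eq_bigr => i _ do under eq_bigr => j _ do rewrite raddf_sum.
under eq_bigr => i _ do under eq_bigr => j _ do under eq_bigr => k _ do
  rewrite /= mcoeffZ -mpolyX_mnm3 mcoeffX eq_mnm3 mulr_natr.
rewrite (sum_ord_delta3 _ _ _ _ (fun i j k => P@_(mnm3 i j k))) -mnm3_eta.
have [in_box|out_box] := boolP [&& _, _ & _]; first by rewrite mulr1n.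
apply/eqP; rewrite mulr0n mcoeff_eq0; apply: contra out_box => m_supp.
by rewrite !redP.
Qed.

Lemma eval3_reducedE q (P : {mpoly F[3]}) (x y z : F) : reduced q P ->
  eval3 P x y z = \sum_(i < q) \sum_(j < q) \sum_(k < q)
                    P@_(mnm3 i j k) * (x ^+ i * y ^+ j * z ^+ k).
Proof.
move=> /reduced_mpolyE {1}->; rewrite /eval3 !raddf_sum; apply: eq_bigr => i _.
rewrite raddf_sum; apply: eq_bigr => j _; rewrite raddf_sum.
apply: eq_bigr => k _; rewrite /= mevalZ; congr (_ * _).
exact: eval3_monomial.
Qed.

End ReducedPolynomials.

Definition M1coef (F : fieldType) (T : {mpoly F[3]}) i j k :=
  T@_(mnm3 i.+1 j.+1 k.+1).

Definition M2coef (F : fieldType) (T : {mpoly F[3]}) i j := T@_(mnm3 i j 0).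

Section NormalForm.

Variables (F : fieldType) (s : seq F) (n : nat) (T : {mpoly F[3]}).
Hypotheses (s_uniq : uniq s) (s_large : (n.+2 <= size s)%N).
Hypothesis redT : reduced n.+2 T.
Hypothesis propA : forall a b z : F, eval3 T a 0 z = z /\ eval3 T 0 b z = z.
Hypothesis propB : forall x y : F, eval3 T x 1 0 = x /\ eval3 T 1 y 0 = y.

Local Notation t i j k := T@_(mnm3 i j k).

Lemma eval3_Y0 a z :
  eval3 T a 0 z = \sum_(i < n.+2) \sum_(k < n.+2) t i 0 k * (a ^+ i * z ^+ k).
Proof.
rewrite (eval3_reducedE _ _ _ redT); apply: eq_bigr => i _.
rewrite big_ord_recl [X in _ + X]big1 ?addr0 => [|j _].
  by apply: eq_bigr => k _; rewrite expr0 mulr1.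
by apply: big1 => k _; rewrite exprS !mul0r mulr0 mul0r mulr0.
Qed.

Lemma eval3_X0 b z :
  eval3 T 0 b z = \sum_(j < n.+2) \sum_(k < n.+2) t 0 j k * (b ^+ j * z ^+ k).
Proof.
rewrite (eval3_reducedE _ _ _ redT) big_ord_recl.
rewrite [X in _ + X]big1 ?addr0 => [|i _].
  by apply: eq_bigr => j _; apply: eq_bigr => k _; rewrite expr0 mul1r.
by apply: big1 => j _; apply: big1 => k _; rewrite exprS !mul0r mulr0.
Qed.

Lemma eval3_Y1Z0 x :
  eval3 T x 1 0 = \sum_(i < n.+2) (\sum_(j < n.+2) t i j 0) * x ^+ i.
Proof.
rewrite (eval3_reducedE _ _ _ redT); apply: eq_bigr => i _; rewrite mulr_suml.
apply: eq_bigr => j _; rewrite big_ord_recl [X in _ + X]big1 ?addr0 => [|k _].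
  by rewrite !expr0 expr1n !mulr1.
by rewrite exprS mul0r !mulr0.
Qed.

Lemma eval3_X1Z0 y :
  eval3 T 1 y 0 = \sum_(j < n.+2) (\sum_(i < n.+2) t i j 0) * y ^+ j.
Proof.
rewrite (eval3_reducedE _ _ _ redT) exchange_big; apply: eq_bigr => j _.
rewrite mulr_suml; apply: eq_bigr => i _.
rewrite big_ord_recl [X in _ + X]big1 ?addr0 => [|k _].
  by rewrite !expr0 expr1n !mulr1 mul1r.
by rewrite exprS mul0r !mulr0.
Qed.

Lemma coef_Y0 i k : (i < n.+2)%N -> (k < n.+2)%N ->
  t i 0 k = ((i == 0) && (k == 1))%:R.
Proof.
apply: (poly2_fun_monomial (f := fun i k => t i 0 k) s_uniq s_large) => //.
by move=> a z _ _; rewrite -eval3_Y0 (propA a 0 z).1 expr0 mul1r expr1.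
Qed.

Lemma coef_X0 j k : (j < n.+2)%N -> (k < n.+2)%N ->
  t 0 j k = ((j == 0) && (k == 1))%:R.
Proof.
apply: (poly2_fun_monomial (f := fun j k => t 0 j k) s_uniq s_large) => //.
by move=> b z _ _; rewrite -eval3_X0 (propA 0 b z).2 expr0 mul1r expr1.
Qed.

Lemma sum_coef_Z0_row i : (i < n.+2)%N ->
  \sum_(j < n.+2) t i j 0 = (i == 1)%:R.
Proof.
pose row i := \sum_(j < n.+2) t i j 0.
apply: (poly_fun_monomial (g := row) s_uniq s_large) => //.
by move=> x _; rewrite -eval3_Y1Z0 (propB x 0).1 expr1.
Qed.

Lemma sum_coef_Z0_col j : (j < n.+2)%N ->
  \sum_(i < n.+2) t i j 0 = (j == 1)%:R.
Proof.
pose col j := \sum_(i < n.+2) t i j 0.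
apply: (poly_fun_monomial (g := col) s_uniq s_large) => //.
by move=> y _; rewrite -eval3_X1Z0 (propB 0 y).2 expr1.
Qed.

Lemma reduced_normal_form :
  T = vZ F + vX F * vY F * vZ F * M1poly n.+2 (M1coef T) +
      M2poly n.+2 (M2coef T).
Proof.
have Z_part :
    \sum_(j < n.+2) \sum_(k < n.+2) t 0 j k *: monomial3 F 0 j k = vZ F.
  under eq_bigr => j _ do under eq_bigr => k _ do
    rewrite coef_X0 // scaler_nat.
  rewrite (sum_ord_delta2 _ _ _ (fun j k => monomial3 F 0 j k)).
  by rewrite !expr0 !mul1r expr1.
have Y0_part :
    \sum_(i < n.+1) \sum_(k < n.+2) t i.+1 0 k *: monomial3 F i.+1 0 k = 0.
  apply: big1 => i _; apply: big1 => k _.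
  by rewrite coef_Y0 //= ?scale0r // ltnS.
have M2_part :
    \sum_(i < n.+1) \sum_(j < n.+1) t i.+1 j.+1 0 *: monomial3 F i.+1 j.+1 0 =
    M2poly n.+2 (M2coef T).
  rewrite /M2poly big_add1 big_mkord; apply: eq_bigr => i _.
  rewrite big_add1 big_mkord; apply: eq_bigr => j _.
  by rewrite expr0 mulr1 -mul_mpolyC mulrA.
have M1_part :
    \sum_(i < n.+1) \sum_(j < n.+1) \sum_(k < n.+1)
      t i.+1 j.+1 k.+1 *: monomial3 F i.+1 j.+1 k.+1 =
    vX F * vY F * vZ F * M1poly n.+2 (M1coef T).
  rewrite /M1poly mulr_sumr; apply: eq_bigr => i _.
  rewrite mulr_sumr; apply: eq_bigr => j _.
  rewrite mulr_sumr; apply: eq_bigr => k _.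
  by rewrite -mul_mpolyC !exprS /M1coef; ring.
rewrite {1}(reduced_mpolyE redT).
rewrite (sum_cube_recl _ (fun i j k => t i j k *: monomial3 F i j k)).
by rewrite Z_part Y0_part M2_part M1_part addr0 addrAC.
Qed.

Lemma sum_M2coef_col j : (1 <= j <= n.+1)%N ->
  \sum_(1 <= i < n.+2) M2coef T i j = (j == 1)%:R.
Proof.
case/andP => j_gt0 j_le.
rewrite -sum_coef_Z0_col ?ltnS // big_ord_recl coef_X0 ?ltnS //= andbF add0r.
by rewrite big_add1 big_mkord.
Qed.

Lemma sum_M2coef_row i : (1 <= i <= n.+1)%N ->
  \sum_(1 <= j < n.+2) M2coef T i j = (i == 1)%:R.
Proof.
case/andP => i_gt0 i_le.
rewrite -sum_coef_Z0_row ?ltnS // big_ord_recl coef_Y0 ?ltnS //= andbF add0r.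
by rewrite big_add1 big_mkord.
Qed.

Lemma eval3_X1 y z :
  eval3 T 1 y z = y + z + y * z * eval3 (M1poly n.+2 (M1coef T)) 1 y z.
Proof.
have eval3_T a b c : eval3 T a b c =
    c + a * b * c * eval3 (M1poly n.+2 (M1coef T)) a b c +
    eval3 (M2poly n.+2 (M2coef T)) a b c.
  by rewrite {1}reduced_normal_form /eval3 !rmorphD !rmorphM /= !mevalXU.
have := (propB 0 y).2; rewrite !eval3_T mulr0 mul0r !add0r eval3_M2poly.
by move=> M2_y; rewrite eval3_M2poly M2_y mul1r addrC addrA.
Qed.

End NormalForm.

Theorem lemma4p7 (F : finFieldType) (T : {mpoly F[3]}) :
  reduced #|F| T ->
  (forall a b z : F, eval3 T a 0 z = z /\ eval3 T 0 b z = z) ->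
  (forall x y : F, eval3 T x 1 0 = x /\ eval3 T 1 y 0 = y) ->
  exists (b : nat -> nat -> nat -> F) (c : nat -> nat -> F),
    T = vZ F + vX F * vY F * vZ F * M1poly #|F| b + M2poly #|F| c /\
    (forall j : nat, (1 <= j <= #|F|.-1)%N ->
       \sum_(1 <= i < #|F|) c i j = (j == 1%N)%:R /\
       \sum_(1 <= i < #|F|) c j i = (j == 1%N)%:R) /\
    (forall y z : F,
       eval3 T 1 y z = y + z + y * z * eval3 (M1poly #|F| b) 1 y z).
Proof.
move=> redT propA propB.
have [n card_F] : exists n, #|F| = n.+2.
  by case: #|F| (card_finNzRing_gt1 F) => [|[|n]] // _; exists n.
have enum_large : (n.+2 <= size (enum F))%N by rewrite -cardE card_F.
have uniq_F := enum_uniq F.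
rewrite card_F in redT *.
exists (M1coef T), (M2coef T); split.
  exact: reduced_normal_form uniq_F enum_large redT propA.
split=> [j j_range | y z]; last first.
  exact: eval3_X1 uniq_F enum_large redT propA propB y z.
split; [apply: (sum_M2coef_col uniq_F enum_large) |
        apply: (sum_M2coef_row uniq_F enum_large)] => //.
Qed.
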